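(* Let $\mathcal{P}$ be a finite set of passwords, $R_1,\dots,R_m\subseteq\mathcal{P}$ positive rules, and $\ell_1,\dots,\ell_n$ rankings of $\mathcal{P}$. Consider IterativeElimination: set $S_0=[m]$, $i=0$; while $S_i\neq\emptyset$, let $w(S_i)$ be a password maximizing $\Pr[w\mid\mathcal{A}_{S_i}]$ over $w\in\mathcal{A}_{S_i}$, set $S_{i+1}=S_i\setminus\{j : w(S_i)\in R_j\}$ and increase $i$; finally return $S_{i^*}$ where $i^*$ minimizes $p(1,\mathcal{A}_{S_i})$ over the nonempty sets $S_i$ produced. Then the returned set $S$ satisfies $p(1,\mathcal{A}_S)\le p(1,\mathcal{A}_{S'})$ for every $S'\subseteq[m]$ (with $\mathcal{A}_{S'}\ne\emptyset$).
   Context: Positive rules setting: for $S\subseteq[m]$, the policy is $\mathcal{A}_S=\bigcup_{i\in S}R_i$. Ranking model: user $i$, under policy $\mathcal{A}$, chooses the most preferred (according to $\ell_i$) password in $\mathcal{A}$; $\Pr[w\mid\mathcal{A}]=\frac1n|\{i: \text{user } i\text{ chooses } w\}|$. $p(1,\mathcal{A})=\max_{w\in\mathcal{A}}\Pr[w\mid\mathcal{A}]$, the probability of the most popular allowed password. *)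

From mathcomp Require Import all_boot all_order all_algebra.
Set Implicit Arguments. Unset Strict Implicit. Unset Printing Implicit Defensive.
Import Order.TTheory GRing.Theory Num.Theory.
Local Open Scope ring_scope.

(* User i's ranking l i : P -> nat is a rank function (lower = more preferred),
   required to be injective (a strict total order on P). *)
Section Defs.
Variables (P : finType) (m n : nat) (R : 'I_m -> {set P}) (l : 'I_n -> P -> nat).

Definition policy (S : {set 'I_m}) : {set P} := \bigcup_(j in S) R j.

Definition chooses (i : 'I_n) (A : {set P}) (w : P) : bool :=
  (w \in A) && [forall w', (w' \in A) ==> (l i w <= l i w')%N].

Definition Pr (w : P) (A : {set P}) : rat :=
  #|[set i | chooses i A w]|%:R / n%:R.

(* p(1, A) = max_{w in A} Pr[w | A]  (all values are >= 0) *)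
Definition p1 (A : {set P}) : rat := \big[Num.max/0]_(w in A) Pr w A.

Definition IE_run (s : nat -> {set 'I_m}) (k : nat) : Prop :=
  s 0%N = setT /\ s k = set0 /\
  forall i, (i < k)%N ->
    s i != set0 /\
    exists w, w \in policy (s i) /\
      (forall w', w' \in policy (s i) -> Pr w' (policy (s i)) <= Pr w (policy (s i))) /\
      s i.+1 = s i :\: [set j | w \in R j].

Definition IE_output (s : nat -> {set 'I_m}) (k : nat) (S : {set 'I_m}) : Prop :=
  exists2 i, (i < k)%N &
    S = s i /\ forall i', (i' < k)%N -> p1 (policy (s i)) <= p1 (policy (s i')).
End Defs.

From mathcomp Require Import all_boot all_order all_algebra.
Import Order.TTheory GRing.Theory Num.Theory.
Local Open Scope ring_scope.
Set Implicit Arguments. Unset Strict Implicit. Unset Printing Implicit Defensive.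

(* Given S' with A_{S'} nonempty, follow the run up to the first step i that
   removes a rule of S'.  Then S' is contained in S_i and the eliminated
   password w = w(S_i) lies in A_{S'}, which is contained in A_{S_i}.  Shrinking
   a policy can only increase the share of a password that stays allowed, so
   p(1, A_{S'}) >= Pr[w | A_{S'}] >= Pr[w | A_{S_i}] = p(1, A_{S_i}) >= p(1, A_S). *)

Lemma exists_switch_off (Q : pred nat) (k : nat) :
  Q 0%N -> ~~ Q k -> exists2 i, (i < k)%N & Q i && ~~ Q i.+1.
Proof.
elim: k => [Q0 /negP //|k IHk Q0 nQk1].
have [Qk|nQk] := boolP (Q k); first by exists k => //; rewrite Qk.
by have [i ik Qi] := IHk Q0 nQk; exists i => //; apply: ltnW.
Qed.

Section Policies.
Variables (P : finType) (m : nat) (R : 'I_m -> {set P}).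

Lemma policyS (S1 S2 : {set 'I_m}) :
  S1 \subset S2 -> policy R S1 \subset policy R S2.
Proof.
move=> sS12; apply/subsetP => x /bigcupP[j jS1 xRj].
by apply/bigcupP; exists j => //; apply: (subsetP sS12).
Qed.

Lemma policy_neq0 (S : {set 'I_m}) : policy R S != set0 -> S != set0.
Proof. by apply: contraNneq => ->; rewrite /policy big_set0. Qed.

Lemma mem_policy_eliminated (S' S : {set 'I_m}) (w : P) :
  S' \subset S -> ~~ (S' \subset S :\: [set j | w \in R j]) ->
  w \in policy R S'.
Proof.
move=> sS'S /subsetPn[j jS']; rewrite !inE (subsetP sS'S _ jS') andbT negbK.
by move=> wRj; apply/bigcupP; exists j.
Qed.

End Policies.

Section Shares.
Variables (P : finType) (n : nat) (l : 'I_n -> P -> nat).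

Lemma Pr_ge0 (w : P) (A : {set P}) : 0 <= Pr l w A.
Proof. by rewrite /Pr divr_ge0 ?ler0n. Qed.

Lemma Pr_subset (w : P) (A B : {set P}) :
  B \subset A -> w \in B -> Pr l w A <= Pr l w B.
Proof.
move=> sBA wB; rewrite /Pr ler_wpM2r ?invr_ge0 ?ler0n // ler_nat.
apply/subset_leq_card/subsetP => i; rewrite !inE => /andP[_ /forallP wbest].
rewrite /chooses wB; apply/forallP => w'; apply/implyP => w'B.
exact: (implyP (wbest w') (subsetP sBA _ w'B)).
Qed.

Lemma Pr_le_p1 (w : P) (A : {set P}) : w \in A -> Pr l w A <= p1 l A.
Proof. by move=> wA; rewrite /p1 (bigD1 w) //= le_max lexx. Qed.

Lemma p1_le_maximizer (w : P) (A : {set P}) :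
  (forall w', w' \in A -> Pr l w' A <= Pr l w A) -> p1 l A <= Pr l w A.
Proof.
move=> wmax; rewrite /p1; elim/big_ind: _ => //; first exact: Pr_ge0.
by move=> x y xle yle; rewrite ge_max xle yle.
Qed.

End Shares.

Theorem theorem3p3 (P : finType) (m n : nat) (R : 'I_m -> {set P})
  (l : 'I_n -> P -> nat) (l_inj : forall i, injective (l i))
  (s : nat -> {set 'I_m}) (k : nat) (S : {set 'I_m}) :
  IE_run R l s k -> IE_output R l s k S ->
  forall S' : {set 'I_m}, policy R S' != set0 ->
    p1 l (policy R S) <= p1 l (policy R S').
Proof.
move=> [s0 [sk run]] [i0 i0k [-> i0min]] S' AS'_neq0.
have [i ik /andP[sS'si nsS'si1]] :
    exists2 i, (i < k)%N & (S' \subset s i) && ~~ (S' \subset s i.+1).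
  apply: (@exists_switch_off (fun i => S' \subset s i)); first by rewrite s0 subsetT.
  by rewrite sk subset0; apply: policy_neq0 AS'_neq0.
have [_ [w [_ [wmax si1]]]] := run i ik.
rewrite si1 in nsS'si1.
have wS' := mem_policy_eliminated sS'si nsS'si1.
apply: le_trans (i0min i ik) _.
apply: le_trans (p1_le_maximizer wmax) _.
apply: le_trans (Pr_subset l (policyS R sS'si) wS') _.
exact: Pr_le_p1.
Qed.
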